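(* Let $\mathrm A$ be a nontrivial system of Bilocal Classical Theory (BCT) and $\rho=\sum_ip_i|i)_{\mathrm A}$ a deterministic state, with $|i)_{\mathrm A}$ the pure states and $\mathbf p=(p_i)$ a probability distribution. Then for each $k=1,2,3$, \[ S_k^{\rm reg}(\rho)=S_k(\rho)+1=H(\mathbf p)+1 . \]
   Context: BCT is an operational probabilistic theory with the following structure. Systems: a trivial system and, for every integer $D>1$, exactly one system of size $D$. For a nontrivial system $\mathrm A$ of size $D_{\mathrm A}$, every state is a nonnegative combination of the $D_{\mathrm A}$ pure states $|i)_{\mathrm A}$, which are the vertices of the simplex of deterministic states and are jointly perfectly discriminable; BCT is weakly causal (unique deterministic effect per system), classical and convex. For nontrivial $\mathrm A,\mathrm B$, the composite $\mathrm{AB}$ has size $2D_{\mathrm A}D_{\mathrm B}$, with pure states $|(ij)_s)_{\mathrm{AB}}$, $s\in\{+,-\}$, and $|i)_{\mathrm A}\boxtimes|j)_{\mathrm B}=\tfrac12\sum_{s=\pm}|(ij)_s)_{\mathrm{AB}}$; for three systems $((ij)_{s_1}k)_{s_2}=(i(jk)_{s_1s_2})_{s_1}$. Consequently $\rho^{\boxtimes N}=\sum_{\mathbf i,\mathbf s}p_{i_1}\cdots p_{i_N}2^{-(N-1)}|\mathbf i_{\mathbf s})$, with $|\mathbf i_{\mathbf s})$, $\mathbf i\in\{1,\dots,D_{\mathrm A}\}^N$, $\mathbf s\in\{\pm\}^{N-1}$, the pure states of $\mathrm A^{\boxtimes N}$. Entropies: an event is atomic if every refinement of it (collection of events from a common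 test summing to it) consists of multiples of it; an atomic observation test has only atomic effects. For a deterministic state $\sigma$, let $\mathcal P(\sigma)$ be its decompositions $\sigma=\sum_ip_i\phi_i$ into pure states, and for an atomic observation test $\{a_j\}$ let $I,J$ have joint distribution $q(i,j)=p_i(a_j|\phi_i)$. $S_1(\sigma)=\inf_{\{a_j\}}H(J)$, $S_2(\sigma)=\sup_{\mathcal P(\sigma)}\sup_{\{a_j\}}H(I:J)$, $S_3(\sigma)=\inf_{\mathcal P(\sigma)}H(I)$, and $S_k^{\rm reg}(\sigma)=\limsup_{N\to\infty}S_k(\sigma^{\boxtimes N})/N$; $H$ is Shannon entropy in base 2. *)

From mathcomp Require Import all_boot all_order all_algebra.
From mathcomp Require Import all_classical all_reals all_analysis.
Set Implicit Arguments. Unset Strict Implicit. Unset Printing Implicit Defensive.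
Import Order.TTheory GRing.Theory Num.Theory.
Local Open Scope classical_set_scope.
Local Open Scope ring_scope.

Section BCT.
Variable R : realType.

(* logarithm in base 2 (ln 0 = 0 in mathcomp, so 0 * log2 0 = 0) *)
Definition log2 (x : R) : R := ln x / ln 2.

Definition entropy (X : finType) (q : X -> R) : R :=
  - \sum_(x : X) q x * log2 (q x).

Definition mutinf (n m : nat) (q : 'I_n -> 'I_m -> R) : R :=
  entropy (fun i : 'I_n => \sum_(j < m) q i j)
  + entropy (fun j : 'I_m => \sum_(i < n) q i j)
  - entropy (fun ij : 'I_n * 'I_m => q ij.1 ij.2).

(* A (nontrivial) system of BCT of size #|T| is a classical system whose
   pure (normalized) states are the vertices |t) = delta_t, t : T.
   States are nonnegative vectors T -> R, effects are vectors T -> [0,1],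
   the unique deterministic effect is the all-ones vector. *)
Section System.
Variable T : finType.

Definition pure_state (t : T) : T -> R := fun x => (x == t)%:R.

Definition pairing (e sigma : T -> R) : R := \sum_(x : T) e x * sigma x.

Definition deterministic_state (sigma : T -> R) : Prop :=
  (forall x, 0 <= sigma x) /\ \sum_(x : T) sigma x = 1.

Definition is_effect (e : T -> R) : Prop := forall x, 0 <= e x <= 1.

Definition obs_test (m : nat) (a : 'I_m -> T -> R) : Prop :=
  (forall j, is_effect (a j)) /\ (forall x, \sum_(j < m) a j x = 1).

(* a refinement of e: events b_1..b_k, all appearing in one common
   observation test, summing to e *)
Definition refinement (e : T -> R) (k : nat) (b : 'I_k -> T -> R) : Prop :=
  (forall i, is_effect (b i)) /\ (forall x, \sum_(i < k) b i x = e x) /\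
  exists (l : nat) (c : 'I_l -> T -> R),
    (forall i, is_effect (c i)) /\
    (forall x, \sum_(i < k) b i x + \sum_(i < l) c i x = 1).

Definition atomic (e : T -> R) : Prop :=
  is_effect e /\
  forall (k : nat) (b : 'I_k -> T -> R), refinement e b ->
    forall i, exists lam : R, forall x, b i x = lam * e x.

Definition atomic_obs_test (m : nat) (a : 'I_m -> T -> R) : Prop :=
  obs_test a /\ forall j, atomic (a j).

Definition pure_decomposition (sigma : T -> R) (n : nat)
    (w : 'I_n -> R) (t : 'I_n -> T) : Prop :=
  (forall i, 0 <= w i) /\ \sum_(i < n) w i = 1 /\
  forall x, sigma x = \sum_(i < n) w i * pure_state (t i) x.

Definition S1 (sigma : T -> R) : R :=
  inf [set v | exists (m : nat) (a : 'I_m -> T -> R),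
        atomic_obs_test a /\ v = entropy (fun j => pairing (a j) sigma)].

Definition S2 (sigma : T -> R) : R :=
  sup [set v | exists (n : nat) (w : 'I_n -> R) (t : 'I_n -> T)
                      (m : nat) (a : 'I_m -> T -> R),
        pure_decomposition sigma w t /\ atomic_obs_test a /\
        v = mutinf (fun i j => w i * pairing (a j) (pure_state (t i)))].

Definition S3 (sigma : T -> R) : R :=
  inf [set v | exists (n : nat) (w : 'I_n -> R) (t : 'I_n -> T),
        pure_decomposition sigma w t /\ v = entropy w].

End System.

(* The system A^{⊠N}, A of size D: pure states |i_s), i : [D]^N,
   s : {+,-}^(N-1) (encoded as bool), size D^N 2^(N-1). *)
Definition tensor_index (D N : nat) : finType :=
  ({ffun 'I_N -> 'I_D} * {ffun 'I_N.-1 -> bool})%type.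

Definition tensor_pow (D : nat) (p : 'I_D -> R) (N : nat) :
    tensor_index D N -> R :=
  fun x => (\prod_(k < N) p (x.1 k)) * (2%:R ^- N.-1).

Definition regularized
    (S : forall T : finType, (T -> R) -> R) (D : nat) (p : 'I_D -> R)
    : \bar R :=
  limn_esup (fun N : nat => ((S (tensor_index D N) (@tensor_pow D p N)) / N%:R)%:E).

End BCT.

(* In a classical system every atomic effect is a multiple of a point
   evaluation and every pure decomposition merely splits point masses.  Hence
   S1 and S3 of a deterministic state are its Shannon entropy (coarse-graining
   does not increase entropy), and so is S2, since the outcome of an atomic
   test determines which pure state occurred.  The state rho^(⊠N) is the
   product of N copies of p with the uniform distribution on the 2^(N-1) sign
   strings, so its entropy is N H(p) + N - 1; dividing by N gives H(p) + 1 in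
   the limit. *)

From mathcomp Require Import all_boot all_order all_algebra.
From mathcomp Require Import all_classical all_reals all_analysis.
From mathcomp Require Import ring lra.
Import Order.TTheory GRing.Theory Num.Theory.
Local Open Scope classical_set_scope.
Local Open Scope ring_scope.
Set Implicit Arguments. Unset Strict Implicit. Unset Printing Implicit Defensive.

Section Entropy.
Variable R : realType.

Lemma inf_attained (E : set R) x : E x -> lbound E x -> inf E = x.
Proof.
move=> Ex lbx; apply/eqP; rewrite eq_le; apply/andP; split.
  by apply: ge_inf => //; exists x.
by apply: lb_le_inf => //; exists x.
Qed.

Lemma sumr_mul_indicator (I : finType) (P : pred I) (F : I -> R) :
  \sum_i F i * (P i)%:R = \sum_(i | P i) F i.
Proof.
by rewrite [RHS]big_mkcond; apply: eq_bigr => i _; case: (P i); rewrite ?mulr1 ?mulr0.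
Qed.

Lemma sum_fst_fibre (X Y : finType) (F : X * Y -> R) x :
  \sum_(k | k.1 == x) F k = \sum_y F (x, y).
Proof.
transitivity (\sum_(i | i == x) \sum_y F (i, y)); last by rewrite big_pred1_eq.
by rewrite pair_big_dep; apply: eq_big => [[i j]|[i j] _] //=; rewrite andbT.
Qed.

Lemma ln2_gt0 : 0 < ln (2%:R : R).
Proof. by apply: ln_gt0; rewrite ltr1n. Qed.

Lemma ler_log2 (x y : R) : 0 < x -> x <= y -> log2 x <= log2 y.
Proof.
move=> x0 xy; have y0 : 0 < y by apply: lt_le_trans xy.
by rewrite /log2 ler_pM2r ?invr_gt0 ?ln2_gt0 // ler_ln ?posrE.
Qed.

Lemma log2_pow2 n : log2 (2%:R ^+ n : R) = n%:R.
Proof.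
by rewrite /log2 lnXn ?ltr0n // mulrnAl mulfV // lt0r_neq0 // ln2_gt0.
Qed.

Lemma mulr_log2M (a b : R) : 0 <= a -> 0 <= b ->
  a * b * log2 (a * b) = a * b * log2 a + a * b * log2 b.
Proof.
rewrite le0r => /predU1P[->|a0]; first by rewrite !mul0r add0r.
rewrite le0r => /predU1P[->|b0]; first by rewrite !(mulr0, mul0r) addr0.
by rewrite /log2 lnM ?posrE // mulrDl mulrDr.
Qed.

Lemma prodr_log2 (I : finType) (F : I -> R) : (forall i, 0 <= F i) ->
  (\prod_i F i) * log2 (\prod_i F i) = (\prod_i F i) * \sum_i log2 (F i).
Proof.
move=> F0; have [[i Fi0]|] := pselect (exists i, F i = 0).
  by rewrite (bigD1 i) //= Fi0 !mul0r.
move=> /forallNP Fneq0.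
have Fgt0 i : 0 < F i by rewrite lt0r F0 andbT; apply/eqP/Fneq0.
have [_ lnF] : 0 < \prod_i F i /\ ln (\prod_i F i) = \sum_i ln (F i).
  apply: (big_rec2 (fun y x => 0 < x /\ ln x = y)); first by rewrite ln1.
  move=> i y1 y2 _ [y2_gt0 <-]; split; first exact: mulr_gt0.
  by rewrite lnM ?posrE.
by rewrite /log2 lnF mulr_suml.
Qed.

Definition uniform (Y : finType) : Y -> R := fun=> #|Y|%:R^-1.

Lemma sum_uniform (Y : finType) : (0 < #|Y|)%N -> \sum_(y : Y) uniform y = 1.
Proof.
move=> Y_gt0; rewrite /uniform sumr_const -[_ *+ _]mulr_natr.
by rewrite mulVf // pnatr_eq0 -lt0n.
Qed.

Lemma entropy_uniform (Y : finType) : entropy (@uniform Y) = log2 #|Y|%:R.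
Proof.
rewrite /entropy /uniform sumr_const; have [->|Y_gt0] := ssrnat.posnP #|Y|.
  by rewrite mulr0n oppr0 /log2 ln0 ?mul0r.
rewrite /log2 lnV ?posrE ?ltr0n // -[_ *+ _]mulr_natr.
by rewrite mulrAC mulVf ?mul1r ?mulNr ?opprK // pnatr_eq0 -lt0n.
Qed.

Lemma entropy_coarsening_le (K X : finType) (f : K -> X) (q : K -> R) (s : X -> R) :
  (forall k, 0 <= q k) -> (forall x, s x = \sum_(k | f k == x) q k) ->
  entropy s <= entropy q.
Proof.
move=> q_ge0 sE; rewrite /entropy.
have -> : \sum_x s x * log2 (s x) = \sum_k q k * log2 (s (f k)).
  rewrite (partition_big f predT) //=; apply: eq_bigr => x _.
  by rewrite {1}sE mulr_suml; apply: eq_bigr => k /eqP ->.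
rewrite lerN2; apply: ler_sum => k _.
have [->|qk_neq0] := eqVneq (q k) 0; first by rewrite !mul0r.
have qk_gt0 : 0 < q k by rewrite lt0r qk_neq0 q_ge0.
apply: ler_wpM2l => //; apply: ler_log2 => //.
by rewrite sE (bigD1 k) //= lerDl sumr_ge0.
Qed.

Lemma entropy_refinement (K X : finType) (f : K -> X) (s : X -> R) (lam : K -> R) :
  (forall x, 0 <= s x) -> (forall k, 0 <= lam k) ->
  (forall x, \sum_(k | f k == x) lam k = 1) ->
  entropy (fun k => lam k * s (f k)) =
  entropy s - \sum_k s (f k) * (lam k * log2 (lam k)).
Proof.
move=> s_ge0 lam_ge0 lam_fibre.
have fibres : \sum_k lam k * (s (f k) * log2 (s (f k))) = \sum_x s x * log2 (s x).
  rewrite (partition_big f predT) //=; apply: eq_bigr => x _.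
  rewrite -[RHS]mul1r -(lam_fibre x) mulr_suml.
  by apply: eq_bigr => k /eqP ->.
rewrite /entropy -fibres -opprD -big_split /=; congr (- _); apply: eq_bigr => k _.
by rewrite mulr_log2M //; ring.
Qed.

Lemma entropy_pair (X Y : finType) (q : X -> R) (u : Y -> R) :
  (forall x, 0 <= q x) -> \sum_x q x = 1 ->
  (forall y, 0 <= u y) -> \sum_y u y = 1 ->
  entropy (fun xy : X * Y => q xy.1 * u xy.2) = entropy q + entropy u.
Proof.
move=> q_ge0 q_sum1 u_ge0 u_sum1.
have -> : (fun xy : X * Y => q xy.1 * u xy.2) = (fun xy => u xy.2 * q xy.1).
  by apply/funext => xy; rewrite mulrC.
rewrite (entropy_refinement (f := fst)) //; last by move=> x; rewrite sum_fst_fibre.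
rewrite -(pair_bigA _ (fun x y => q x * (u y * log2 (u y)))) /=.
under eq_bigr do rewrite -mulr_sumr.
by rewrite -mulr_suml q_sum1 mul1r.
Qed.

End Entropy.

Section IID.
Variables (R : realType) (I : finType) (p : I -> R).
Hypotheses (p_ge0 : forall i, 0 <= p i) (p_sum1 : \sum_i p i = 1).

Lemma sum_iid N : \sum_(f : {ffun 'I_N -> I}) \prod_k p (f k) = 1.
Proof.
rewrite -(bigA_distr_bigA (fun (k : 'I_N) (i : I) => p i)) /=.
by rewrite big1 // => k _; rewrite p_sum1.
Qed.

Lemma sum_iid_log2 N (k0 : 'I_N) :
  \sum_(f : {ffun 'I_N -> I}) (\prod_k p (f k)) * log2 (p (f k0)) =
  \sum_i p i * log2 (p i).
Proof.
pose G (k : 'I_N) (i : I) := p i * (if k == k0 then log2 (p i) else 1).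
have prodG (f : {ffun 'I_N -> I}) :
    (\prod_k p (f k)) * log2 (p (f k0)) = \prod_k G k (f k).
  rewrite big_split /=; congr (_ * _).
  by rewrite (bigD1 k0) //= eqxx big1 ?mulr1 // => k /negPf ->.
rewrite (eq_bigr _ (fun f _ => prodG f)) -(bigA_distr_bigA G) /=.
rewrite (bigD1 k0) //= [X in _ * X]big1 ?mulr1.
  by apply: eq_bigr => i _; rewrite /G eqxx.
move=> k /negPf k_neq; rewrite -[RHS]p_sum1.
by apply: eq_bigr => i _; rewrite /G k_neq mulr1.
Qed.

Lemma entropy_iid N :
  entropy (fun f : {ffun 'I_N -> I} => \prod_k p (f k)) = N%:R * entropy p.
Proof.
rewrite /entropy.
under eq_bigr => f _ do rewrite (prodr_log2 (fun k => p_ge0 (f k))) mulr_sumr.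
rewrite exchange_big /=; under eq_bigr do rewrite sum_iid_log2.
by rewrite sumr_const card_ord mulrN mulr_natl.
Qed.

End IID.

Lemma card_ffun_bool n : #|{ffun 'I_n -> bool}| = (2 ^ n)%N.
Proof. by rewrite card_ffun card_bool card_ord. Qed.

Section TensorPower.
Variables (R : realType) (D : nat) (p : 'I_D -> R).
Hypotheses (p_ge0 : forall i, 0 <= p i) (p_sum1 : \sum_i p i = 1).

Lemma tensor_powE N :
  @tensor_pow R D p N = fun x => (\prod_k p (x.1 k)) * uniform R x.2.
Proof. by apply/funext => x; rewrite /tensor_pow /uniform card_ffun_bool natrX. Qed.

Lemma tensor_pow_deterministic N : deterministic_state (@tensor_pow R D p N).
Proof.
rewrite tensor_powE; split=> [x|].
  by rewrite mulr_ge0 ?prodr_ge0 // invr_ge0 ler0n.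
rewrite -(pair_bigA _ (fun (f : {ffun 'I_N -> 'I_D}) s =>
                        (\prod_k p (f k)) * uniform R s)) /=.
under eq_bigr do rewrite -mulr_sumr.
by rewrite -mulr_suml sum_iid // sum_uniform ?mul1r // card_ffun_bool expn_gt0.
Qed.

Lemma entropy_tensor_pow N :
  entropy (@tensor_pow R D p N) = N%:R * entropy p + N.-1%:R.
Proof.
rewrite tensor_powE (entropy_pair (q := fun f : {ffun 'I_N -> 'I_D} => \prod_k p (f k))).
rewrite entropy_iid ?entropy_uniform //.
- by rewrite card_ffun_bool natrX log2_pow2.
- by move=> f; rewrite prodr_ge0.
- exact: sum_iid.
- by move=> s; rewrite invr_ge0 ler0n.
- by rewrite sum_uniform // card_ffun_bool expn_gt0.
Qed.

Lemma regularized_entropy (S : forall T : finType, (T -> R) -> R) :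
  (forall (T : finType) (s : T -> R), deterministic_state s -> S T s = entropy s) ->
  regularized S p = (entropy p + 1)%:E.
Proof.
move=> S_entropy; rewrite /regularized; set u := (fun N : nat => _).
suff u_cvg : u @ \oo --> (entropy p + 1)%:E by rewrite (cvg_limn_einf_sup u_cvg).2.
rewrite -cvg_shiftS.
have -> : [sequence u n.+1]_n = (fun n => (entropy p + 1 - harmonic n)%:E).
  apply/funext => n /=; rewrite /u S_entropy; last exact: tensor_pow_deterministic.
  rewrite entropy_tensor_pow /=; congr (_%:E).
  by rewrite -natr1; field; rewrite natr1 pnatr_eq0.
apply: cvg_EFin; first by near=> n.
have -> : fine \o (fun n => (entropy p + 1 - harmonic n)%:E) =
          (fun _ => entropy p + 1) - harmonic by apply/funext.
rewrite -[X in _ --> X]subr0; apply: cvgB; first exact: cvg_cst.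
exact: cvg_harmonic.
Unshelve. all: by end_near.
Qed.

End TensorPower.

Section PureStates.
Variables (R : realType) (T : finType).

Lemma sum_mul_pure_state (G : T -> R) (x : T) : \sum_y G y * pure_state R x y = G x.
Proof. by rewrite sumr_mul_indicator big_pred1_eq. Qed.

Lemma sum_pure_states_at (w : T -> R) (x : T) : \sum_y w y * pure_state R y x = w x.
Proof.
rewrite -[RHS](sum_mul_pure_state w x); apply: eq_bigr => y _.
by rewrite /pure_state eq_sym.
Qed.

Lemma pure_state_effect (x : T) : is_effect (pure_state R x).
Proof. by move=> y; rewrite /pure_state ler0n lern1 leq_b1. Qed.

Lemma pure_state_atomic (x : T) : atomic (pure_state R x).
Proof.
split=> [|k b [b_eff [b_sum _]] i]; first exact: pure_state_effect.
exists (b i x) => y; rewrite /pure_state; have [->|y_neq] := eqVneq y x.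
  by rewrite mulr1.
have /psumr_eq0P b_y0 : \sum_(j < k) b j y = 0.
  by rewrite b_sum /pure_state (negPf y_neq).
by rewrite mulr0 b_y0 // => j _; case/andP: (b_eff j y).
Qed.

Lemma atomic_scaled_pure_state (x0 : T) (e : T -> R) :
  atomic e -> exists (lam : R) (x : T), forall y, e y = lam * pure_state R x y.
Proof.
move=> [e_eff e_atomic].
(* If e x != 0, split e into its restriction to x and the rest: atomicity makes
   the restriction a multiple of e, so e vanishes off x. *)
have [[x ex_neq0]|e0] := pselect (exists x, e x != 0); last first.
  exists 0, x0 => y; rewrite mul0r; apply/eqP/negPn/negP => ey_neq0.
  by apply: e0; exists y.
exists (e x), x => y; rewrite /pure_state.
have [->|y_neq] := eqVneq y x; first by rewrite mulr1.
pose b (i : 'I_2) z := e z * (if i == ord0 then (z == x)%:R else (z != x)%:R).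
have b_sum z : \sum_(i < 2) b i z = e z.
  rewrite !big_ord_recl big_ord0 /b /=.
  by case: (z == x); rewrite /= ?mulr1 ?mulr0 ?addr0 ?add0r.
have b_refines : refinement e b.
  split=> [i z|]; first by rewrite /b; case: (i == ord0); case: (z == x);
    rewrite /= ?mulr1 ?mulr0 ?lexx ?ler01 //; exact: e_eff.
  split=> //; exists 1%N, (fun _ z => 1 - e z); split.
    by move=> _ z; case/andP: (e_eff z) => e_ge0 e_le1; apply/andP; split; lra.
  by move=> z; rewrite b_sum big_ord1 addrC subrK.
have [lam b0E] := e_atomic 2%N b b_refines ord0.
have := b0E y; have := b0E x.
rewrite /b /= eqxx (negPf y_neq) mulr1 mulr0 => exE eyE.
have lam1 : lam = 1 by apply: (mulIf ex_neq0); rewrite mul1r -exE.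
by rewrite mulr0 -[e y]mul1r -lam1 -eyE.
Qed.

Lemma sum_enum_val (F : T -> R) : \sum_(i < #|T|) F (enum_val i) = \sum_x F x.
Proof. by rewrite -big_enum_val. Qed.

Definition point_test : 'I_#|T| -> T -> R := fun j => pure_state R (enum_val j).

Lemma point_test_atomic : atomic_obs_test point_test.
Proof.
split=> [|j]; last exact: pure_state_atomic.
split=> [j|y]; first exact: pure_state_effect.
rewrite /point_test (sum_enum_val (fun x => pure_state R x y)).
by rewrite -[RHS](sum_pure_states_at (fun=> 1) y); apply: eq_bigr => x _; rewrite mul1r.
Qed.

End PureStates.

Section DeterministicState.
Variables (R : realType) (T : finType) (sigma : T -> R).

Lemma decomposition_fibre n (w : 'I_n -> R) (t : 'I_n -> T) :
  pure_decomposition sigma w t -> forall y, sigma y = \sum_(i | t i == y) w i.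
Proof.
move=> [_ [_ sigmaE]] y; rewrite sigmaE -sumr_mul_indicator.
by apply: eq_bigr => i _; rewrite /pure_state eq_sym.
Qed.

Lemma pairing_decomposition n (w : 'I_n -> R) (t : 'I_n -> T) (e : T -> R) :
  pure_decomposition sigma w t -> pairing e sigma = \sum_i w i * e (t i).
Proof.
move=> [_ [_ sigmaE]]; rewrite /pairing.
under eq_bigr do rewrite sigmaE mulr_sumr.
rewrite exchange_big; apply: eq_bigr => i _ /=.
by rewrite -(sum_mul_pure_state e (t i)) mulr_sumr; apply: eq_bigr => y _; ring.
Qed.

Lemma pairing_scaled_pure_state (e : T -> R) (lam : R) (x : T) :
  (forall y, e y = lam * pure_state R x y) -> pairing e sigma = lam * sigma x.
Proof.
move=> eE; rewrite /pairing -sum_mul_pure_state mulr_sumr.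
by apply: eq_bigr => y _; rewrite eE; ring.
Qed.

Lemma entropy_enum_val :
  entropy (fun i : 'I_#|T| => sigma (enum_val i)) = entropy sigma.
Proof. by rewrite /entropy (sum_enum_val (fun y => sigma y * log2 (sigma y))). Qed.

Hypothesis sigma_det : deterministic_state sigma.

Lemma deterministic_state_inhabited : inhabited T.
Proof.
case: (pickP (@predT T)) => [x _|T0]; first exact: inhabits x.
by have := sigma_det.2; rewrite big_pred0 // => /eqP; rewrite eq_sym oner_eq0.
Qed.

Lemma enum_val_decomposition :
  pure_decomposition sigma (fun i : 'I_#|T| => sigma (enum_val i)) enum_val.
Proof.
split=> [i|]; first exact: sigma_det.1.
split=> [|y]; first by rewrite sum_enum_val sigma_det.2.
by rewrite (sum_enum_val (fun x => sigma x * pure_state R x y)) sum_pure_states_at.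
Qed.

Lemma atomic_obs_testP m (a : 'I_m -> T -> R) : atomic_obs_test a ->
  exists (lam : 'I_m -> R) (x : 'I_m -> T),
    [/\ forall j, 0 <= lam j, forall j y, a j y = lam j * pure_state R (x j) y
      & forall y, \sum_(j | x j == y) lam j = 1].
Proof.
move=> [[a_eff a_sum] a_atomic]; case: deterministic_state_inhabited => x0.
have /choice [lx lxE] j :
    exists lx : R * T, forall y, a j y = lx.1 * pure_state R lx.2 y.
  have [lam [x ajE]] := atomic_scaled_pure_state x0 (a_atomic j).
  by exists (lam, x).
exists (fun j => (lx j).1), (fun j => (lx j).2); split=> [j|//|y].
  have := lxE j (lx j).2; rewrite /pure_state eqxx mulr1 => <-.
  by have /andP[] := a_eff j (lx j).2.
rewrite -(a_sum y) -sumr_mul_indicator; apply: eq_bigr => j _.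
by rewrite lxE /pure_state eq_sym.
Qed.

Lemma S1_deterministic : S1 sigma = entropy sigma.
Proof.
apply: inf_attained.
  exists #|T|, (@point_test R T); split; first exact: point_test_atomic.
  rewrite -entropy_enum_val; congr entropy; apply/funext => j.
  rewrite (@pairing_scaled_pure_state _ 1 (enum_val j)) ?mul1r // => y.
  by rewrite mul1r.
move=> _ [m [a [a_atomic ->]]].
have [lam [x [lam_ge0 aE lam_fibre]]] := atomic_obs_testP a_atomic.
apply: (entropy_coarsening_le (f := x)) => [j|y].
  by rewrite (pairing_scaled_pure_state (aE j)) mulr_ge0 ?sigma_det.1.
rewrite -[LHS]mul1r -(lam_fibre y) mulr_suml; apply: eq_bigr => j /eqP <-.
exact/esym/pairing_scaled_pure_state.
Qed.

Lemma S3_deterministic : S3 sigma = entropy sigma.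
Proof.
apply: inf_attained.
  exists #|T|, (fun i => sigma (enum_val i)), enum_val.
  by rewrite entropy_enum_val; split=> //; exact: enum_val_decomposition.
move=> _ [n [w [t [decomp ->]]]].
exact: (entropy_coarsening_le (f := t) decomp.1 (decomposition_fibre decomp)).
Qed.

Lemma mutinf_scaled_point_test n (w : 'I_n -> R) (t : 'I_n -> T)
    m (a : 'I_m -> T -> R) (lam : 'I_m -> R) (x : 'I_m -> T) :
  pure_decomposition sigma w t -> obs_test a ->
  (forall j, 0 <= lam j) -> (forall j y, a j y = lam j * pure_state R (x j) y) ->
  (forall y, \sum_(j | x j == y) lam j = 1) ->
  mutinf (fun i j => w i * pairing (a j) (pure_state R (t i))) = entropy sigma.
Proof.
move=> decomp [a_eff a_sum] lam_ge0 aE lam_fibre.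
(* H(J) and H(I,J) differ from H(sigma) and H(I) = H(w) by the same term,
   which cancels in H(I) + H(J) - H(I,J). *)
pose L j := lam j * log2 (lam j).
have aL j y : a j y * log2 (a j y) = pure_state R (x j) y * L j.
  by rewrite aE /pure_state /L; case: (y == x j); rewrite ?mulr1 ?mul1r ?mulr0 ?mul0r.
have qE : (fun i j => w i * pairing (a j) (pure_state R (t i))) =
          (fun i j => a j (t i) * w i).
  by apply/funext => i; apply/funext => j; rewrite mulrC /pairing sum_mul_pure_state.
have marg_I : (fun i => \sum_j a j (t i) * w i) = w.
  by apply/funext => i; rewrite -mulr_suml a_sum mul1r.
have marg_J : (fun j => \sum_i a j (t i) * w i) = (fun j => lam j * sigma (x j)).
  apply/funext => j; rewrite -(pairing_scaled_pure_state (aE j)).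
  by rewrite (pairing_decomposition _ decomp); apply: eq_bigr => i _; rewrite mulrC.
have entropy_J : entropy (fun j => lam j * sigma (x j)) =
                 entropy sigma - \sum_j sigma (x j) * L j.
  by apply: entropy_refinement => // y; exact: sigma_det.1.
have entropy_IJ : entropy (fun ij : 'I_n * 'I_m => a ij.2 (t ij.1) * w ij.1) =
                  entropy w - \sum_j sigma (x j) * L j.
  rewrite (entropy_refinement (f := fst)) //; first last.
  - by move=> i; rewrite sum_fst_fibre /= a_sum.
  - by move=> [i j]; rewrite aE mulr_ge0 ?ler0n.
  - exact: decomp.1.
  congr (_ - _).
  rewrite -(pair_bigA _ (fun i j => w i * (a j (t i) * log2 (a j (t i))))).
  rewrite exchange_big; apply: eq_bigr => j _ /=.
  under eq_bigr do rewrite aL mulrA; rewrite -mulr_suml.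
  rewrite -(pairing_decomposition _ decomp).
  by rewrite (@pairing_scaled_pure_state _ 1 (x j)) ?mul1r // => y; rewrite mul1r.
by rewrite qE /mutinf /= marg_I marg_J entropy_J entropy_IJ; ring.
Qed.

Lemma S2_deterministic : S2 sigma = entropy sigma.
Proof.
rewrite /S2; set E := (X in sup X); suff -> : E = [set entropy sigma] by rewrite sup1.
have mutinfE n (w : 'I_n -> R) t m (a : 'I_m -> T -> R) :
    pure_decomposition sigma w t -> atomic_obs_test a ->
    mutinf (fun i j => w i * pairing (a j) (pure_state R (t i))) = entropy sigma.
  move=> decomp a_atomic.
  have [lam [x [lam_ge0 aE lam_fibre]]] := atomic_obs_testP a_atomic.
  exact: mutinf_scaled_point_test decomp a_atomic.1 lam_ge0 aE lam_fibre.
apply/seteqP; split=> v /=.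
  by move=> [n [w [t [m [a [decomp [a_atomic ->]]]]]]]; exact: mutinfE.
move=> ->; have decomp := enum_val_decomposition; have test := @point_test_atomic R T.
exists #|T|, (fun i => sigma (enum_val i)), enum_val, #|T|, (@point_test R T).
by do 2!split=> //; rewrite mutinfE.
Qed.

End DeterministicState.

Theorem proposition4 (R : realType) (D : nat) (hD : (1 < D)%N)
    (p : 'I_D -> R) (hp0 : forall i, 0 <= p i) (hp1 : \sum_(i < D) p i = 1) :
  let rho : 'I_D -> R := fun i => \sum_(j < D) p j * @pure_state R _ j i in
  [/\ regularized (@S1 R) p = (S1 rho + 1)%:E /\ S1 rho + 1 = entropy p + 1,
      regularized (@S2 R) p = (S2 rho + 1)%:E /\ S2 rho + 1 = entropy p + 1 &
      regularized (@S3 R) p = (S3 rho + 1)%:E /\ S3 rho + 1 = entropy p + 1].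
Proof.
move=> rho; have -> : rho = p by apply/funext => i; rewrite /rho sum_pure_states_at.
have p_det : deterministic_state p by [].
rewrite S1_deterministic // S2_deterministic // S3_deterministic //.
by split; split=> //; apply: regularized_entropy => // T s s_det;
  [exact: S1_deterministic | exact: S2_deterministic | exact: S3_deterministic].
Qed.
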